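(* Consider the NWLA-CuSum stopping time $\overline{\tau}(b)$ with window size $w$ as defined in the context. For any $w>0$ and any $b>0$, $\mathbb{E}_\infty[\overline{\tau}(b)]\ge e^b$. Consequently, $\overline{\tau}(\overline{b}_\alpha)\in\mathcal{C}_\alpha$ if $\overline{b}_\alpha=|\log\alpha|$.
   Context: Let $X_1,X_2,\dots\in\mathbb{R}^d$ be independent with an unknown change-point $\nu$: before $\nu$ the density is the known $p_0$, from $\nu$ on it is $p_1$ (w.r.t. a dominating measure $\mu$). $\mathbb{P}_\infty,\mathbb{E}_\infty$ denote probability/expectation when no change occurs (all observations have density $p_0$). $\mathcal{C}_\alpha:=\{\tau:1/\mathbb{E}_\infty[\tau]\le\alpha\}$. A fixed density estimation procedure maps a finite collection of observations to a density w.r.t. $\mu$; for a positive integer $w$ and $n>w$, $\widehat{p}^w_n$ is its output on $X_{n-w},\dots,X_{n-1}$. Let $\widehat{Z}^w_n:=\log(\widehat{p}^w_n(X_n)/p_0(X_n))$ for $n>w$; the NWLA-CuSum statistic is $\overline{W}(1)=\dots=\overline{W}(w)=0$, $\overline{W}(n)=(\overline{W}(n-1))^++\widehat{Z}^w_n$ for $n>w$, and $\overline{\tau}(b):=\inf\{n>w:\overline{W}(n)\ge b\}$. *)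

From HB Require Import structures.
From mathcomp Require Import all_boot all_order all_algebra.
From mathcomp Require Import all_classical all_reals all_analysis.
Set Implicit Arguments. Unset Strict Implicit. Unset Printing Implicit Defensive.
Import Order.TTheory GRing.Theory Num.Theory.
Local Open Scope classical_set_scope.
Local Open Scope ring_scope.

Section nwla.
Context {R : realType} {dO : measure_display} {Omega : measurableType dO}.
Context {dT : measure_display} {T : measurableType dT}.

Definition mutually_independent (P : probability Omega R)
    (X : nat -> Omega -> T) (I : set nat) : Prop :=
  forall (s : seq nat) (A : nat -> set T),
    uniq s -> {subset s <= I} -> (forall i, measurable (A i)) ->
    P (\bigcap_(i in [set` s]) (X i @^-1` A i)) =
    ((\prod_(i <- s) fine (P (X i @^-1` A i)))%:E)%E.

Definition is_density (mu : {measure set T -> \bar R}) (f : T -> R) : Prop :=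
  [/\ measurable_fun setT f, forall x, 0 <= f x &
      (\int[mu]_x (f x)%:E = 1)%E].

Variables (w : nat) (est : w.-tuple T -> T -> R) (p0 : T -> R)
  (X : nat -> Omega -> T).

Definition window (n : nat) (om : Omega) : w.-tuple T :=
  [tuple X (n - w + i)%N om | i < w].

Definition Zhat (n : nat) (om : Omega) : \bar R :=
  let ph := est (window n om) (X n om) in
  let q := p0 (X n om) in
  if ph == 0 then -oo%E else if q == 0 then +oo%E else (ln (ph / q))%:E.

(* NWLA-CuSum statistic: W(1) = ... = W(w) = 0,
   W(n) = (W(n-1))^+ + Zhat n for n > w. (W 0 is an unused 0.) *)
Fixpoint Wbar (n : nat) (om : Omega) : \bar R :=
  match n with
  | 0 => 0%E
  | m.+1 => if (m.+1 <= w)%N then 0%E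
            else (maxe (Wbar m om) 0 + Zhat m.+1 om)%E
  end.

(* tau(b) = inf { n > w : W(n) >= b }  (inf of the empty set = +oo) *)
Definition taubar (b : R) (om : Omega) : \bar R :=
  ereal_inf [set (n%:R)%:E | n in [set n | (w < n)%N /\ (b%:E <= Wbar n om)%E]].

End nwla.

Definition E_infty {R : realType} {dO : measure_display}
  {Omega : measurableType dO} (P : probability Omega R) (tau : Omega -> \bar R)
  : \bar R := (\int[P]_om tau om)%E.

Definition in_C_alpha {R : realType} {dO : measure_display}
  {Omega : measurableType dO} (P : probability Omega R) (alpha : R)
  (tau : Omega -> \bar R) : Prop :=
  ((E_infty P tau)^-1 <= alpha%:E)%E.

From HB Require Import structures.
From mathcomp Require Import all_boot all_order all_algebra.
From mathcomp Require Import all_classical all_reals all_analysis.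
From mathcomp Require Import measurable_realfun.
From mathcomp Require Import zify lra.
Set Implicit Arguments. Unset Strict Implicit. Unset Printing Implicit Defensive.
Import Order.TTheory GRing.Theory Num.Theory.
Local Open Scope classical_set_scope.
Local Open Scope ring_scope.

(* Let L_n = exp(Zhat_n) be the likelihood ratio ([lratio n]) and
   R_n = (1 + R_{n-1}) L_n, with R_n = 0 for n <= w, the Shiryaev-Roberts
   statistic driven by it ([sr n]).  By induction e^{W(n)} <= R_n, so
   R_tau >= e^b whenever the procedure stops.  Since the estimate uses only
   past observations and integrates to one, E_oo[g L_n] <= E_oo[g] for every
   nonnegative g measurable with respect to X_1, ..., X_{n-1}; hence
   E_oo[R_{N /\ tau}] <= sum_{n<N} P(tau > n) <= E_oo[tau].  Together,
   e^b <= E_oo[tau] + e^b P(tau > N), and N P(tau > N) <= E_oo[tau] forces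
   P(tau > N) -> 0 when E_oo[tau] is finite. *)

Section integral_density.
Local Open Scope ereal_scope.
Context {R : realType} {d : measure_display} {T : measurableType d}.
Variables (mu nu : {measure set T -> \bar R}) (p : T -> R).
Hypothesis mp : measurable_fun setT p.
Hypothesis p_ge0 : forall x, (0 <= p x)%R.
Hypothesis nuE : forall A, measurable A -> nu A = \int[mu]_(x in A) (p x)%:E.

Import HBNNSimple.

Lemma integral_density_nnsfun (h : {nnsfun T >-> R}) :
  \int[nu]_x (h x)%:E = \int[mu]_x ((h x)%:E * (p x)%:E).
Proof.
have mindic r : measurable_fun setT (fun x => (r * \1_(h @^-1` [set r]) x)%R%:E).
  by apply/measurable_EFinP; exact: measurable_funM.
under eq_integral do rewrite fimfunE -fsumEFin//.
under [RHS]eq_integral => x _.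
  rewrite fimfunE -fsumEFin// ge0_mule_fsuml; last first.
    by move=> r; exact: nnfun_muleindic_ge0.
  over.
rewrite /= ge0_integral_fsum//; last by move=> r x _; exact: nnfun_muleindic_ge0.
rewrite ge0_integral_fsum//; last 2 first.
- by move=> r; apply: emeasurable_funM => //; exact/measurable_EFinP.
- by move=> r x _; rewrite mule_ge0 ?lee_fin//; exact: nnfun_muleindic_ge0.
apply: eq_fsbigr => r hr.
rewrite integralZl_indic_nnsfun//.
under [RHS]eq_integral do rewrite EFinM -muleA.
rewrite ge0_integralZl//; last 3 first.
- by apply: emeasurable_funM; apply/measurable_EFinP.
- by move=> x _; rewrite mule_ge0 ?lee_fin.
- by move: hr; rewrite inE => -[t _ <-]; rewrite lee_fin.
congr (_ * _); rewrite integral_indic ?setIT// nuE//.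
rewrite -[in LHS](setTI (h @^-1` _)) integral_mkcondr; apply: eq_integral => x _.
by rewrite epatch_indic muleC.
Qed.

Lemma ge0_integral_density (f : T -> \bar R) :
  measurable_fun setT f -> (forall x, 0 <= f x) ->
  \int[nu]_x f x = \int[mu]_x (f x * (p x)%:E).
Proof.
move=> mf f0; pose h := nnsfun_approx measurableT mf.
have h_cvg x : (EFin \o h n) x @[n --> \oo] --> f x.
  exact: cvg_nnsfun_approx.
have h_nd x : {homo (fun n => (EFin \o h n) x) : m n / (m <= n)%N >-> m <= n}.
  by move=> m n mn; rewrite lee_fin; exact/lefP/nd_nnsfun_approx.
have mh n : measurable_fun setT (EFin \o h n).
  exact/measurable_EFinP/measurable_funP.
have mp' : measurable_fun setT (fun x => (p x)%:E) by exact/measurable_EFinP.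
transitivity (limn (fun n => \int[nu]_x (h n x)%:E)).
  rewrite -monotone_convergence//= => [|n x _|x _]; last exact: h_nd.
  - by apply: eq_integral => x _; apply/esym/cvg_lim => //; exact: h_cvg.
  - by rewrite lee_fin.
transitivity (limn (fun n => \int[mu]_x ((h n x)%:E * (p x)%:E))).
  by congr (limn _); apply/funext => n; exact: integral_density_nnsfun.
rewrite -monotone_convergence//= => [|n|n x _|x _ m n mn].
- apply: eq_integral => x _; apply/cvg_lim => //.
  by apply: cvgeZr => //; exact: h_cvg.
- exact: emeasurable_funM (mh n) mp'.
- by rewrite mule_ge0 ?lee_fin.
- by rewrite lee_wpmul2r ?lee_fin//; exact: h_nd.
Qed.
End integral_density.

Lemma measurable_fun_eq0 d (T : measurableType d) (R : realType) (f : T -> R) :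
  measurable_fun setT f -> measurable_fun setT (fun x => f x == 0).
Proof.
move=> mf; apply: (measurable_fun_bool true).
rewrite (_ : _ @^-1` _ = f @^-1` [set 0]); first exact: mf.
by apply/seteqP; split => x /= /eqP.
Qed.

Lemma measurable_fun_if_eq0 d (T : measurableType d) (R : realType)
    (f g h : T -> R) (a c : \bar R) :
  measurable_fun setT f -> measurable_fun setT g -> measurable_fun setT h ->
  measurable_fun setT
    (fun x => if f x == 0 then a else if g x == 0 then c else (h x)%:E).
Proof.
move=> mf mg mh.
apply: measurable_fun_ifT => //; first exact: measurable_fun_eq0.
apply: measurable_fun_ifT => //; first exact: measurable_fun_eq0.
exact/measurable_EFinP.
Qed.

(* No measurability is needed: the nonnegative integral is a supremum over the
   simple functions below the integrand.  [taubar] is never shown measurable. *)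
Lemma ge0_le_integral_nonmeas d (T : measurableType d) (R : realType)
    (mu : {measure set T -> \bar R}) (f g : T -> \bar R) :
  (forall x, 0 <= f x)%E -> (forall x, f x <= g x)%E ->
  (\int[mu]_x f x <= \int[mu]_x g x)%E.
Proof.
move=> f0 fg; have g0 x : (0 <= g x)%E by exact: le_trans (fg x).
rewrite !ge0_integralTE//; apply: ereal_sup_le => _ [h hf <-].
by exists h => // x; exact: le_trans (hf x) (fg x).
Qed.

Lemma le_of_vanishing_tail (R : realType) (c r : R) (a : nat -> R) : 0 <= c ->
  (forall N, c <= r + c * a N) -> (forall N, N.+1%:R * a N <= r) -> c <= r.
Proof.
move=> c0 tail mass; rewrite leNgt; apply/negP => rc.
pose N := Num.truncn (c * r / (c - r)).
have := truncnS_gt (c * r / (c - r)); rewrite -/N ltr_pdivrMr ?subr_gt0// => big.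
have := tail N; have := mass N; have : 0 <= N.+1%:R :> R by [].
nra.
Qed.

Lemma in_C_alpha_abs_ln (R : realType) (dO : measure_display)
    (Omega : measurableType dO) (P : probability Omega R)
    (tau : R -> Omega -> \bar R) (alpha : R) :
  (forall b, 0 < b -> ((expR b)%:E <= E_infty P (tau b))%E) ->
  0 < alpha < 1 -> in_C_alpha P alpha (tau `|ln alpha|).
Proof.
move=> Etau /andP[a0 a1]; have lna : ln alpha < 0 by rewrite ln_lt0// a0 a1.
have b0 : 0 < `|ln alpha| by rewrite normr_gt0 lt_eqF.
have := Etau _ b0; rewrite ltr0_norm// expRN lnK ?posrE// /in_C_alpha.
case: (E_infty P _) => [r| |]//= => [|_]; last by rewrite lee_fin ltW.
rewrite lee_fin => ar; have r0 : 0 < r by apply: lt_le_trans ar; rewrite invr_gt0.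
by rewrite inver gt_eqF// lee_fin -[leRHS]invrK lef_pV2 ?posrE ?invr_gt0.
Qed.

Section past.
Context {R : realType} {dO : measure_display} {Omega : measurableType dO}.
Context {dT : measure_display} {T : measurableType dT}.
Variables (P : probability Omega R) (X : nat -> Omega -> T).
Hypothesis mX : forall n, measurable_fun setT (X n).
Hypothesis indep : mutually_independent P X [set n | (0 < n)%N].

Definition cylinder (k : nat) : set_system Omega :=
  [set A | exists (s : seq nat) (B : nat -> set T),
     [/\ uniq s, all (fun i => 0 < i <= k)%N s, (forall i, measurable (B i)) &
       A = \bigcap_(i in [set` s]) X i @^-1` B i]].

Definition past (k : nat) := g_sigma_algebraType (cylinder k).

Lemma measurable_X_preimage n B : measurable B -> measurable (X n @^-1` B).
Proof. by move=> mB; rewrite -[X in measurable X]setTI; exact: mX. Qed.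

Lemma cylinder_setI_closed k : setI_closed (cylinder k).
Proof.
move=> _ _ [s1 [B1 [u1 s1k mB1 ->]]] [s2 [B2 [u2 s2k mB2 ->]]].
pose B i := (if i \in s1 then B1 i else setT) `&` (if i \in s2 then B2 i else setT).
exists (undup (s1 ++ s2)), B; split.
- exact: undup_uniq.
- by rewrite all_undup all_cat s1k s2k.
- by move=> i; apply: measurableI; case: ifP.
apply/seteqP; split => om /=.
- move=> [H1 H2] i; rewrite /= mem_undup mem_cat => _.
  by split; case: ifPn => // Hi; [exact: H1|exact: H2].
- move=> H; split => i /= Hi; have := H i; rewrite /= mem_undup mem_cat Hi ?orbT /=.
  + by move=> /(_ isT) []; rewrite Hi.
  + by move=> /(_ isT) [_]; rewrite Hi.
Qed.

Lemma cylinder_measurable k A : cylinder k A -> measurable A.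
Proof.
move=> [s [B [_ _ mB ->]]]; apply: bigcap_measurableType => i _.
exact: measurable_X_preimage.
Qed.

Lemma past_measurable k A : <<s cylinder k >> A -> measurable A.
Proof.
apply: smallest_sub; first exact: sigma_algebra_measurable.
exact: cylinder_measurable.
Qed.

Lemma measurable_fun_past k dY (Y : measurableType dY) (f : Omega -> Y) :
  measurable_fun (T := past k) setT f -> measurable_fun setT f.
Proof. by move=> mf _ B mB; apply: (@past_measurable k); exact: mf. Qed.

Lemma measurable_X_past k i : (0 < i <= k)%N ->
  measurable_fun (T := past k) setT (X i).
Proof.
move=> ik _ B mB; rewrite setTI; apply: sub_sigma_algebra.
exists [:: i], (fun=> B); split => //=; first by rewrite ik.
apply/seteqP; split => [om Bom j|om H]; first by rewrite /= inE => /eqP ->.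
by apply: (H i); rewrite /= inE.
Qed.

Local Open Scope ereal_scope.

Lemma indep_cylinder n E A : (0 < n)%N -> measurable E -> cylinder n.-1 A ->
  P (A `&` X n @^-1` E) = P A * P (X n @^-1` E).
Proof.
move=> n0 mE [s [B [us s_lt mB ->]]].
have ns : n \notin s by apply/negP => /(allP s_lt); lia.
have s_pos : {subset s <= [set i | (0 < i)%N]}.
  by move=> i /(allP s_lt) /andP[i0 _]; rewrite inE.
pose B' i := if i == n then E else B i.
have B'E i : i \in s -> B' i = B i.
  by rewrite /B'; case: eqP => // -> sn; move: ns; rewrite sn.
have mB' i : measurable (B' i) by rewrite /B'; case: eqP.
have -> : X n @^-1` E = X n @^-1` B' n by rewrite /B' eqxx.
have -> : \bigcap_(i in [set` s]) X i @^-1` B i =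
    \bigcap_(i in [set` s]) X i @^-1` B' i.
  by apply: eq_bigcapr => i si; rewrite B'E.
have -> : \bigcap_(i in [set` s]) X i @^-1` B' i `&` X n @^-1` B' n =
    \bigcap_(i in [set` (n :: s)]) X i @^-1` B' i.
  rewrite setIC -(bigcap_setU1 (fun i => X i @^-1` B' i)); apply: eq_bigcapl.
  split => i /=; rewrite inE; last by case/predU1P; [left|right].
  by case=> [->|si]; rewrite ?eqxx ?si ?orbT.
rewrite !indep//=; last 2 first.
- by rewrite ns.
- by move=> i; rewrite in_cons => /predU1P[->|/s_pos//]; rewrite inE.
rewrite big_cons -(fineK (fin_num_measure P _ (measurable_X_preimage n (mB' n)))).
by rewrite -EFinM mulrC.
Qed.

Lemma indep_past n E A : (0 < n)%N -> measurable E ->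
  <<s cylinder n.-1 >> A -> P (A `&` X n @^-1` E) = P A * P (X n @^-1` E).
Proof.
move=> n0 mE; have mXE := measurable_X_preimage n mE.
have finP B : measurable B -> P B = (fine (P B))%:E.
  by move=> mB; rewrite fineK// fin_num_measure.
apply: (@dynkin_induction _ (past n.-1) (cylinder n.-1)
  (fun A => P (A `&` X n @^-1` E) = P A * P (X n @^-1` E))) => //.
- exact: cylinder_setI_closed.
- by rewrite setTI probability_setT mul1e.
- by move=> C; exact: indep_cylinder.
- move=> S /past_measurable mS PS.
  have -> : P (~` S `&` X n @^-1` E) = P (X n @^-1` E) - P (S `&` X n @^-1` E).
    rewrite setIC -setDE measureD//; first by rewrite setIC.
    by rewrite -ge0_fin_numE ?measure_ge0// fin_num_measure.
  rewrite PS probability_setC// (finP _ mS) (finP _ mXE) -!EFinM -!EFinB.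
  by rewrite mulrBl mul1r.
- move=> F /(_ _)/past_measurable mF tF /= PF.
  have sumP (G : nat -> set Omega) : (forall i, measurable (G i)) ->
      trivIset setT G -> P (\bigcup_i G i) = \sum_(0 <= i <oo) P (G i).
    move=> mG tG; rewrite measure_bigcup//.
    by apply: eq_eseriesl => i; rewrite in_setT.
  rewrite setI_bigcupl (sumP F)// sumP//; last 2 first.
  + by move=> i; exact: measurableI.
  + exact: trivIset_setIr.
  under eq_eseriesr do rewrite PF muleC.
  by rewrite (finP _ mXE) nneseriesZl// muleC.
Qed.

Definition law n := distribution P (mfun_Sub (mem_set (mX n))).

(* Freezing lemma: X_n is independent of [past n.-1], so a [past n.-1]-measurable
   argument can be held fixed while integrating over the law of X_n. *)
Lemma ge0_integral_indep_past n dY (Y : measurableType dY) (U : Omega -> Y)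
    (F : Y * T -> \bar R) :
  (0 < n)%N -> measurable_fun (T := past n.-1) setT U ->
  measurable_fun setT F -> (forall z, 0 <= F z) ->
  \int[P]_om F (U om, X n om) = \int[P]_om \int[law n]_x F (U om, x).
Proof.
move=> n0 mU' mF F0; have mU := measurable_fun_past mU'.
have mUX : measurable_fun setT (fun om => (U om, X n om)).
  exact: measurable_fun_pair.
pose lawU := distribution P (mfun_Sub (mem_set mU)).
transitivity (\int[distribution P (mfun_Sub (mem_set mUX))]_z F z).
  by rewrite ge0_integral_distribution.
transitivity (\int[lawU \x law n]_z F z).
  apply: eq_measure_integral => A mA _.
  apply/esym/product_measure_unique => // B C mB mC.
  have : <<s cylinder n.-1 >> (U @^-1` B).
    by have := mU' measurableT _ mB; rewrite setTI.
  by move/(indep_past n0 mC).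
rewrite fubini_tonelli1// ge0_integral_distribution//.
- exact: measurable_fun_fubini_tonelli_F.
- by move=> y; apply: integral_ge0.
Qed.

End past.

Section cusum.
Context {R : realType} {dO : measure_display} {Omega : measurableType dO}.
Context {dT : measure_display} {T : measurableType dT}.
Variables (P : probability Omega R) (mu : {measure set T -> \bar R}).
Variables (w : nat) (est : w.-tuple T -> T -> R) (p0 : T -> R)
  (X : nat -> Omega -> T).
Hypothesis mX : forall n, measurable_fun setT (X n).
Hypothesis indep : mutually_independent P X [set n | (0 < n)%N].
Hypothesis density_p0 : is_density mu p0.
Hypothesis density_est : forall y, is_density mu (est y).
Hypothesis mest : measurable_fun setT (fun z : w.-tuple T * T => est z.1 z.2).
Hypothesis lawX : forall n A, (0 < n)%N -> measurable A ->
  P (X n @^-1` A) = (\int[mu]_(x in A) (p0 x)%:E)%E.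

Let mp0 : measurable_fun setT p0. Proof. by case: density_p0. Qed.
Let p0_ge0 x : 0 <= p0 x. Proof. by case: density_p0. Qed.
Let est_ge0 y x : 0 <= est y x. Proof. by case: (density_est y). Qed.

Local Notation W := (Wbar est p0 X).
Local Notation past := (past X).
Local Notation law := (law P mX).

Local Open Scope ereal_scope.

Definition llr (z : w.-tuple T * T) : \bar R :=
  if est z.1 z.2 == 0%R then -oo else if p0 z.2 == 0%R then +oo
  else (ln (est z.1 z.2) - ln (p0 z.2))%:E.

(* [lr z = expeR (llr z)] is the ratio of the two densities, written with [ln]
   so that its measurability reduces to that of [ln] and [expR]. *)
Definition lr (z : w.-tuple T * T) : \bar R :=
  if est z.1 z.2 == 0%R then 0 else if p0 z.2 == 0%R then +oo
  else (expR (ln (est z.1 z.2) - ln (p0 z.2)))%:E.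

Lemma expeR_llr z : expeR (llr z) = lr z.
Proof. by rewrite /lr /llr; case: ifP => //; case: ifP. Qed.

Lemma lr_ge0 z : 0 <= lr z. Proof. by rewrite -expeR_llr expeR_ge0. Qed.

Lemma measurable_ln_diff : measurable_fun setT
  (fun z : w.-tuple T * T => ln (est z.1 z.2) - ln (p0 z.2))%R.
Proof.
apply: measurable_funB.
  by apply: measurableT_comp; [exact: measurable_ln|exact: mest].
by apply: measurableT_comp; [exact: measurable_ln|exact: measurableT_comp].
Qed.

Lemma measurable_llr : measurable_fun setT llr.
Proof.
apply: measurable_fun_if_eq0 => //; last exact: measurable_ln_diff.
exact: measurableT_comp mp0 measurable_snd.
Qed.

Lemma measurable_lr : measurable_fun setT lr.
Proof.
apply: measurable_fun_if_eq0 => //; first exact: measurableT_comp mp0 measurable_snd.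
by apply: measurableT_comp; [exact: measurable_expR|exact: measurable_ln_diff].
Qed.

Lemma lr_density_le y x : lr (y, x) * (p0 x)%:E <= (est y x)%:E.
Proof.
rewrite /lr /=; have [->|e0] := eqVneq (est y x) 0%R; first by rewrite mul0e.
have [->|q0] := eqVneq (p0 x) 0%R; first by rewrite mule0 lee_fin.
have e_gt0 : (0 < est y x)%R by rewrite lt_def e0 est_ge0.
have q_gt0 : (0 < p0 x)%R by rewrite lt_def q0 p0_ge0.
by rewrite -EFinM expRB !lnK ?posrE// divfK.
Qed.

Lemma integral_lr_le1 n y : (0 < n)%N -> \int[law n]_x lr (y, x) <= 1.
Proof.
move=> n0; have [mest_y _ <-] := density_est y.
rewrite (ge0_integral_density (mu := mu) (nu := law n) mp0 p0_ge0); first last.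
- by move=> x; exact: lr_ge0.
- by apply: measurableT_comp measurable_lr _; exact: measurable_fun_pair.
- by move=> A mA; exact: lawX.
apply: ge0_le_integral => //.
- by move=> x _; rewrite mule_ge0 ?lr_ge0 ?lee_fin.
- apply: emeasurable_funM; last exact/measurable_EFinP.
  by apply: measurableT_comp measurable_lr _; exact: measurable_fun_pair.
- exact/measurable_EFinP.
- by move=> x _; exact: lr_density_le.
Qed.

Lemma Zhat_llr n om : Zhat est p0 X n om = llr (window w X n om, X n om).
Proof.
rewrite /Zhat /llr /=; case: ifPn => // e0; case: ifPn => // q0.
have e_gt0 : (0 < est (window w X n om) (X n om))%R by rewrite lt_def e0 est_ge0.
have q_gt0 : (0 < p0 (X n om))%R by rewrite lt_def q0 p0_ge0.
by rewrite lnM ?posrE ?invr_gt0// lnV ?posrE.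
Qed.

Definition lratio n om := lr (window w X n om, X n om).

Lemma measurable_window k n : (w < n <= k.+1)%N ->
  measurable_fun (T := past k) setT (window w X n).
Proof.
move=> wnk; apply/measurable_fun_tnthP => i.
rewrite (_ : _ \o _ = X (n - w + i)); last first.
  by apply/funext => om; rewrite /= /window tnth_mktuple.
by apply: measurable_X_past; have := ltn_ord i; lia.
Qed.

Lemma measurable_window_X k n : (w < n <= k)%N ->
  measurable_fun (T := past k) setT (fun om => (window w X n om, X n om)).
Proof.
move=> wnk; apply: measurable_fun_pair; first by apply: measurable_window; lia.
by apply: measurable_X_past; lia.
Qed.

Lemma measurable_Zhat k n : (w < n <= k)%N ->
  measurable_fun (T := past k) setT (Zhat est p0 X n).
Proof.
move=> wnk; rewrite (_ : Zhat _ _ _ _ = llr \o (fun om => (window w X n om, X n om))).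
  exact: measurableT_comp measurable_llr (measurable_window_X wnk).
by apply/funext => om; rewrite Zhat_llr.
Qed.

Lemma measurable_lratio k n : (w < n <= k)%N ->
  measurable_fun (T := past k) setT (lratio n).
Proof.
by move=> wnk; exact: measurableT_comp measurable_lr (measurable_window_X wnk).
Qed.

Lemma measurable_Wbar k n : (n <= k)%N -> measurable_fun (T := past k) setT (W n).
Proof.
elim: n => [|n IH] nk //=; case: leqP => // wn.
apply: emeasurable_funD; last by apply: measurable_Zhat; lia.
by apply: measurable_maxe => //; apply: IH; lia.
Qed.

Fixpoint sr (n : nat) (om : Omega) : \bar R :=
  match n with
  | 0 => 0
  | m.+1 => if (m.+1 <= w)%N then 0 else (1 + sr m om) * lratio m.+1 om
  end.

Lemma sr_ge0 n om : 0 <= sr n om.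
Proof.
elim: n => //= n IH; case: ifP => // _.
by rewrite mule_ge0 ?lr_ge0// adde_ge0.
Qed.

Lemma measurable_sr k n : (n <= k)%N -> measurable_fun (T := past k) setT (sr n).
Proof.
elim: n => [|n IH] nk //=; case: leqP => // wn.
apply: emeasurable_funM; last by apply: measurable_lratio; lia.
by apply: emeasurable_funD => //; apply: IH; lia.
Qed.

Lemma Wbar_small n om : (n <= w)%N -> W n om = 0.
Proof. by case: n => //= n ->. Qed.

Lemma WbarS n om : (w < n.+1)%N ->
  W n.+1 om = maxe (W n om) 0 + Zhat est p0 X n.+1 om.
Proof. by move=> wn; rewrite /= leqNgt wn. Qed.

Lemma expeR_maxe_Wbar_le n om : expeR (maxe (W n om) 0) <= 1 + sr n om.
Proof.
elim: n => [|n IH]; first by rewrite Wbar_small// max_l// expeR0 adde0.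
case: (leqP n.+1 w) => wn; first by rewrite Wbar_small// max_l// expeR0 /= wn adde0.
rewrite WbarS//= leqNgt wn /=.
have W_le : expeR (maxe (W n om) 0 + Zhat est p0 X n.+1 om) <=
    (1 + sr n om) * lratio n.+1 om.
  by rewrite expeRD Zhat_llr expeR_llr lee_wpmul2r ?lr_ge0.
have [_|_] := leP 0 (maxe (W n om) 0 + Zhat est p0 X n.+1 om).
- exact: le_trans W_le (leeDr _ lee01).
- by rewrite expeR0 leeDl// mule_ge0 ?lr_ge0// adde_ge0 ?sr_ge0.
Qed.

Lemma expeR_Wbar_le n om : (w < n)%N -> expeR (W n om) <= sr n om.
Proof.
case: n => [//|n] /= wn; rewrite leqNgt wn /= expeRD Zhat_llr expeR_llr.
by rewrite lee_wpmul2r ?lr_ge0// expeR_maxe_Wbar_le.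
Qed.

Lemma integral_mul_lratio_le n (g : Omega -> \bar R) :
  (w < n)%N -> (forall om, 0 <= g om) -> measurable_fun (T := past n.-1) setT g ->
  \int[P]_om (g om * lratio n om) <= \int[P]_om g om.
Proof.
move=> wn g0 mg; have n0 : (0 < n)%N by lia.
pose U om := (g om, window w X n om).
have mU : measurable_fun (T := past n.-1) setT U.
  by apply: measurable_fun_pair => //; apply: measurable_window; lia.
(* [`|_|] only matters off the range of [U], where it keeps [F] nonnegative. *)
pose F (z : (\bar R * w.-tuple T) * T) := `|z.1.1| * lr (z.1.2, z.2).
have mF : measurable_fun setT F.
  apply: emeasurable_funM.
    exact: measurableT_comp (measurableT_comp measurable_fst measurable_fst).
  apply: measurableT_comp measurable_lr _.
  exact: measurable_fun_pair (measurableT_comp measurable_snd measurable_fst) _.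
have F0 z : 0 <= F z by rewrite mule_ge0 ?lr_ge0.
have -> : \int[P]_om (g om * lratio n om) = \int[P]_om F (U om, X n om).
  by apply: eq_integral => om _; rewrite /F /= gee0_abs.
rewrite (ge0_integral_indep_past mX indep n0 mU mF F0).
apply: ge0_le_integral => //.
- by move=> om _; exact: integral_ge0.
- have mFF := measurable_fun_fubini_tonelli_F (m2 := law n) F mF F0.
  exact: measurableT_comp mFF (measurable_fun_past mX mU).
- exact: (measurable_fun_past mX mg).
move=> om _; rewrite /F /= ge0_integralZl//; last 2 first.
- by apply: measurableT_comp measurable_lr _; exact: measurable_fun_pair.
- by move=> x _; exact: lr_ge0.
by rewrite gee0_abs// -[leRHS]mule1 lee_wpmul2l// integral_lr_le1.
Qed.

Variable b : R.

Local Notation tau := (taubar est p0 X b).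

Lemma expR_le_sr n om : (w < n)%N -> b%:E <= W n om -> (expR b)%:E <= sr n om.
Proof.
move=> wn bW; apply: le_trans (expeR_Wbar_le om wn).
by rewrite -[leLHS]/(expeR b%:E) lee_expeR.
Qed.

(* [tau_ge n om] holds iff [n%:R%:E <= taubar b om]. *)
Fixpoint tau_ge (n : nat) (om : Omega) : bool :=
  match n with
  | 0 => true
  | m.+1 => tau_ge m om && ((m <= w)%N || (W m om < b%:E))
  end.

Arguments tau_ge : simpl never.

Lemma tau_geS n om :
  tau_ge n.+1 om = tau_ge n om && ((n <= w)%N || (W n om < b%:E)).
Proof. by []. Qed.

Lemma tau_geW n om : tau_ge n.+1 om -> tau_ge n om.
Proof. by rewrite tau_geS => /andP[]. Qed.

Lemma tau_ge_Wbar_lt n m om : tau_ge n om -> (w < m < n)%N -> W m om < b%:E.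
Proof.
elim: n => [|n IH]; first by rewrite ltn0 andbF.
rewrite tau_geS => /andP[tn hn] /andP[wm]; rewrite ltnS leq_eqVlt.
case/predU1P => [mn|mn]; last by apply: IH => //; rewrite wm.
by move: hn; rewrite -mn leqNgt wm.
Qed.

Lemma tau_ge_le_taubar n om : tau_ge n om -> n%:R%:E <= tau om.
Proof.
move=> tn; apply: le_ereal_inf_tmp => _ [m [wm Wm] <-].
rewrite lee_fin ler_nat leqNgt; apply/negP => mn.
have wmn : (w < m < n)%N by rewrite wm mn.
by have := tau_ge_Wbar_lt tn wmn; rewrite ltNge Wm.
Qed.

Lemma taubar_ge0 om : 0 <= tau om.
Proof. exact: (@tau_ge_le_taubar 0). Qed.

Lemma measurable_tau_ge k n : (n <= k.+1)%N ->
  measurable_fun (T := past k) setT (tau_ge n).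
Proof.
elim: n => [|n IH] nk; first exact: measurable_cst.
rewrite (funext (tau_geS n)); apply: measurable_and; first by apply: IH; lia.
case: (n <= w)%N => //=; apply: measurable_fun_lte => //.
by apply: measurable_Wbar; lia.
Qed.

Definition indic_tau_ge n om : \bar R := if tau_ge n om then 1 else 0.
Arguments indic_tau_ge : simpl never.

Lemma indic_tau_ge_ge0 n om : 0 <= indic_tau_ge n om.
Proof. by rewrite /indic_tau_ge; case: ifP. Qed.

Lemma measurable_indic_tau_ge k n : (n <= k.+1)%N ->
  measurable_fun (T := past k) setT (indic_tau_ge n).
Proof. by move=> nk; apply: measurable_fun_ifT => //; exact: measurable_tau_ge. Qed.

(* [sr_stopped n om] is [sr] at time [min(n, taubar b om)]. *)
Fixpoint sr_stopped (n : nat) (om : Omega) : \bar R :=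
  match n with
  | 0 => 0
  | m.+1 => if tau_ge m.+1 om then sr m.+1 om else sr_stopped m om
  end.

Lemma sr_stoppedS n om : sr_stopped n.+1 om =
  if tau_ge n.+1 om then sr n.+1 om else sr_stopped n om.
Proof. by []. Qed.

Lemma sr_stopped_ge0 n om : 0 <= sr_stopped n om.
Proof.
by elim: n => // n IH; rewrite sr_stoppedS; case: ifP => // _; exact: sr_ge0.
Qed.

Lemma sr_stopped_tau_ge n om : tau_ge n om -> sr_stopped n om = sr n om.
Proof. by case: n => //= n ->. Qed.

Lemma measurable_sr_stopped k n : (n <= k)%N ->
  measurable_fun (T := past k) setT (sr_stopped n).
Proof.
elim: n => [|n IH] nk; first exact: measurable_cst.
rewrite (funext (sr_stoppedS n)); apply: measurable_fun_ifT.
- by apply: measurable_tau_ge; lia.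
- exact: measurable_sr.
- by apply: IH; lia.
Qed.

Lemma expR_le_sr_stopped N om :
  (expR b)%:E <= sr_stopped N om + (expR b)%:E * indic_tau_ge N.+1 om.
Proof.
elim: N => [|N IH]; first by rewrite /indic_tau_ge /= mule1 add0e.
rewrite /indic_tau_ge; case: ifPn => [_|stopped].
  by rewrite mule1 leeDr// sr_stopped_ge0.
rewrite mule0 adde0 sr_stoppedS; case: ifPn => [tN|not_tN].
  move: stopped; rewrite tau_geS tN negb_or -ltnNge -leNgt => /andP[wN bW].
  exact: expR_le_sr.
by move: IH; rewrite /indic_tau_ge (negbTE not_tN) mule0 adde0.
Qed.

Lemma sum_indic_tau_ge_le N om : \sum_(n < N) indic_tau_ge n.+1 om <= tau om.
Proof.
suff [] : \sum_(n < N) indic_tau_ge n.+1 om <= tau om /\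
    (tau_ge N om -> \sum_(n < N) indic_tau_ge n.+1 om = N%:R%:E) by [].
elim: N => [|N [IH1 IH2]]; first by rewrite big_ord0 taubar_ge0.
rewrite big_ord_recr /= [indic_tau_ge N.+1 om]/indic_tau_ge.
case: ifPn => [tN|ntN]; last first.
  by rewrite adde0; split => // tN; rewrite tN in ntN.
rewrite IH2 ?(tau_geW tN)// -EFinD natr1.
by split => //; exact: tau_ge_le_taubar.
Qed.

Lemma mul_indic_tau_ge_le N om : N%:R%:E * indic_tau_ge N om <= tau om.
Proof.
rewrite /indic_tau_ge; case: ifP => [tN|_]; last by rewrite mule0 taubar_ge0.
by rewrite mule1; exact: tau_ge_le_taubar.
Qed.

Lemma integral_sr_stopped_succ N : \int[P]_om sr_stopped N.+1 om <=
  \int[P]_om sr_stopped N om + \int[P]_om indic_tau_ge N.+1 om.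
Proof.
have mQ n : measurable_fun setT (sr_stopped n).
  exact: (measurable_fun_past mX (measurable_sr_stopped (leqnn n))).
have mI : measurable_fun (T := past N) setT (indic_tau_ge N.+1).
  exact: measurable_indic_tau_ge.
have I0 om : 0 <= indic_tau_ge N.+1 om by exact: indic_tau_ge_ge0.
have [Nw|wN] := leqP N.+1 w.
  apply: le_trans (leeDl _ (integral_ge0 _ (fun om _ => I0 om))).
  apply: ge0_le_integral => // [om _|om _]; first exact: sr_stopped_ge0.
  by rewrite sr_stoppedS; case: ifP => // _; rewrite [sr _ _]/= Nw sr_stopped_ge0.
pose A om := if tau_ge N.+1 om then 0 else sr_stopped N om.
pose g om := indic_tau_ge N.+1 om * (1 + sr N om).
have A0 om : 0 <= A om by rewrite /A; case: ifP => // _; exact: sr_stopped_ge0.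
have g0 om : 0 <= g om by rewrite mule_ge0// adde_ge0 ?sr_ge0.
have mA : measurable_fun setT A.
  apply: measurable_fun_ifT => //.
  exact: (measurable_fun_past mX (measurable_tau_ge (leqnn N.+1))).
have mg : measurable_fun (T := past N) setT g.
  by apply: emeasurable_funM => //; apply: emeasurable_funD => //; exact: measurable_sr.
have mgL : measurable_fun setT (fun om => g om * lratio N.+1 om).
  apply: emeasurable_funM; first exact: (measurable_fun_past mX mg).
  have wNN : (w < N.+1 <= N.+1)%N by rewrite wN leqnn.
  exact: (measurable_fun_past mX (measurable_lratio wNN)).
have QE om : sr_stopped N.+1 om = A om + g om * lratio N.+1 om.
  rewrite sr_stoppedS /A /g /indic_tau_ge; case: ifP => _; last by rewrite !mul0e adde0.
  by rewrite add0e mul1e [sr _ _]/= leqNgt wN.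
have AgE om : A om + g om = sr_stopped N om + indic_tau_ge N.+1 om.
  rewrite /A /g /indic_tau_ge; case: ifPn => [tN|_]; last by rewrite mul0e !adde0.
  by rewrite add0e mul1e sr_stopped_tau_ge ?(tau_geW tN)// addeC.
under eq_integral do rewrite QE.
rewrite ge0_integralD//; last by move=> om _; rewrite mule_ge0 ?lr_ge0.
apply: le_trans (leeD2l _ (integral_mul_lratio_le wN g0 mg)) _.
rewrite -ge0_integralD//; last exact: (measurable_fun_past mX mg).
under eq_integral do rewrite AgE.
rewrite ge0_integralD// => [om _|]; first exact: sr_stopped_ge0.
exact: (measurable_fun_past mX mI).
Qed.

Lemma integral_sr_stopped_le N :
  \int[P]_om sr_stopped N om <= \sum_(n < N) \int[P]_om indic_tau_ge n.+1 om.
Proof.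
elim: N => [|N IH]; first by rewrite big_ord0 integral0_eq.
rewrite big_ord_recr /=; apply: le_trans (integral_sr_stopped_succ N) _.
by rewrite leeD2r.
Qed.

Lemma measurable_fun_indic_tau_ge n : measurable_fun setT (indic_tau_ge n).
Proof.
exact: (measurable_fun_past mX (measurable_indic_tau_ge (k := n) (leqnSn n))).
Qed.

Lemma integral_indic_tau_ge_le1 n : \int[P]_om indic_tau_ge n om <= 1.
Proof.
have mI := measurable_fun_indic_tau_ge n.
apply: le_trans (_ : _ <= \int[P]_om (cst 1 om)) _.
  apply: ge0_le_integral => // [om _|om _]; first exact: indic_tau_ge_ge0.
  by rewrite /indic_tau_ge; case: ifP.
by rewrite integral_cst//= mul1e probability_setT.
Qed.

Lemma expR_le_E_taubar_tail N :
  (expR b)%:E <= E_infty P tau + (expR b)%:E * \int[P]_om indic_tau_ge N.+1 om.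
Proof.
have mQ : measurable_fun setT (sr_stopped N).
  exact: (measurable_fun_past mX (measurable_sr_stopped (leqnn N))).
have mI := measurable_fun_indic_tau_ge N.+1.
have eb0 : 0 <= (expR b)%:E by rewrite lee_fin expR_ge0.
apply: le_trans (_ : \int[P]_om (sr_stopped N om +
    (expR b)%:E * indic_tau_ge N.+1 om) <= _).
  rewrite -[leLHS]mule1 -(probability_setT P) -integral_cst//.
  apply: ge0_le_integral => // [|om _]; last exact: expR_le_sr_stopped.
  by apply: emeasurable_funD => //; exact: emeasurable_funM.
rewrite ge0_integralD//; last 3 first.
- by move=> om _; exact: sr_stopped_ge0.
- by move=> om _; rewrite mule_ge0 ?indic_tau_ge_ge0.
- exact: emeasurable_funM.
rewrite ge0_integralZl//; last by move=> om _; exact: indic_tau_ge_ge0.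
rewrite leeD2r// (le_trans (integral_sr_stopped_le N))//.
rewrite -ge0_integral_sum//; last 2 first.
- by move=> n; exact: measurable_fun_indic_tau_ge.
- by move=> n om _; exact: indic_tau_ge_ge0.
apply: ge0_le_integral_nonmeas => om; last exact: sum_indic_tau_ge_le.
by apply: sume_ge0 => n _; exact: indic_tau_ge_ge0.
Qed.

Lemma mul_integral_indic_tau_ge_le N :
  N%:R%:E * \int[P]_om indic_tau_ge N om <= E_infty P tau.
Proof.
have mI := measurable_fun_indic_tau_ge N.
rewrite -ge0_integralZl_EFin//; last by move=> om _; exact: indic_tau_ge_ge0.
apply: ge0_le_integral_nonmeas => om; last exact: mul_indic_tau_ge_le.
by rewrite mule_ge0 ?lee_fin ?indic_tau_ge_ge0.
Qed.

Lemma expR_le_E_taubar : (expR b)%:E <= E_infty P tau.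
Proof.
pose a N := \int[P]_om indic_tau_ge N om.
have aE N : a N = (fine (a N))%:E.
  rewrite fineK// ge0_fin_numE ?(le_lt_trans (integral_indic_tau_ge_le1 N)) ?ltry//.
  by apply: integral_ge0 => om _; exact: indic_tau_ge_ge0.
have := @expR_le_E_taubar_tail; have := @mul_integral_indic_tau_ge_le.
have : 0 <= E_infty P tau by apply: integral_ge0 => om _; exact: taubar_ge0.
case: (E_infty P tau) => [r _ mass tail| _ _ _ |//]; last by rewrite leey.
rewrite lee_fin; apply: (le_of_vanishing_tail (a := fun N => fine (a N.+1))).
- exact: expR_ge0.
- by move=> N; have := tail N; rewrite -/(a _) aE -EFinM -EFinD lee_fin.
- by move=> N; have := mass N.+1; rewrite -/(a _) aE -EFinM lee_fin.
Qed.

End cusum.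

Theorem lemma4 (R : realType) (dO : measure_display) (Omega : measurableType dO)
  (P : probability Omega R) (d : nat)
  (mu : {measure set (d.-tuple R) -> \bar R})
  (p0 : d.-tuple R -> R) (X : nat -> Omega -> d.-tuple R)
  (w : nat) (est : w.-tuple (d.-tuple R) -> d.-tuple R -> R) :
  (* observations under P_oo: independent, each with density p0 w.r.t. mu *)
  is_density mu p0 ->
  (forall n, measurable_fun setT (X n)) ->
  mutually_independent P X [set n | (0 < n)%N] ->
  (forall n A, (0 < n)%N -> measurable A ->
     P (X n @^-1` A) = (\int[mu]_(x in A) (p0 x)%:E)%E) ->
  (* the density estimation procedure (jointly measurable) *)
  (forall s, is_density mu (est s)) ->
  measurable_fun setT (fun z : w.-tuple (d.-tuple R) * d.-tuple R => est z.1 z.2) ->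
  (0 < w)%N ->
  (forall b : R, 0 < b ->
     ((expR b)%:E <= E_infty P (taubar est p0 X b))%E) /\
  (forall alpha : R, 0 < alpha < 1 ->
     in_C_alpha P alpha (taubar est p0 X `|ln alpha|)).
Proof.
(* The bound holds for every window size. *)
move=> density_p0 mX indep lawX density_est mest _.
have Etau b := expR_le_E_taubar mX indep density_p0 density_est mest lawX b.
by split=> [b _|alpha]; [exact: Etau | exact: in_C_alpha_abs_ln].
Qed.
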